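(* Let $(X,r)$ be a non-degenerate symmetric set, $S=S(X,r)$ its YB monoid, $G=G(X,r)$ its YB group, $(G,r_G)$ the associated symmetric group and $(G,+,\cdot)$ the associated left brace, and assume the canonical map $S\to G$ is injective (this holds automatically if $X$ is finite); identify $S$ with its image. Then: (1) $S$ is invariant under the left and the right actions of $G$ on itself (i.e. ${}^au\in S$ and $u^a\in S$ for $a\in G$, $u\in S$), so $r_G(S\times S)\subseteq S\times S$; (2) the restriction $r_S$ of $r_G$ to $S\times S$ makes $(S,r_S)$ a non-degenerate symmetric set; (3) $S$ is closed under $+$; $(S,\cdot)$ is a monoid with unit $1$, $(S,+)$ is an abelian monoid with the same neutral element $0=1$, isomorphic to the free abelian monoid on $X$; and $a(b+c)+a=ab+ac$ for all $a,b,c\in S$.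
   Context: A quadratic set $(X,r)$: $X$ nonempty, $r:X\times X\to X\times X$ bijective, $r(x,y)=({}^xy,x^y)$; non-degenerate if all $y\mapsto{}^xy$, $y\mapsto y^x$ are bijections; involutive if $r^2=\mathrm{id}$; braided if $r^{12}r^{23}r^{12}=r^{23}r^{12}r^{23}$ on $X^3$. A symmetric set (solution) is a non-degenerate involutive braided set. The YB monoid $S(X,r)$ (resp. YB group $G(X,r)$) is the monoid (resp. group) generated by $X$ with defining relations $xy=zt$ whenever $r(x,y)=(z,t)\neq(x,y)$; $X$ embeds in $G(X,r)$. A symmetric group is a pair $(G,\sigma)$, $G$ a group, $\sigma(u,v)=({}^uv,u^v)$ an involutive bijection of $G\times G$ with ${}^a1=1,{}^1u=u,1^u=1,a^1=a$, ${}^{ab}u={}^a({}^bu)$, $a^{uv}=(a^u)^v$, ${}^a(uv)=({}^au)({}^{a^u}v)$, $(ab)^u=(a^{{}^bu})(b^u)$, $uv=({}^uv)(u^v)$. The associated symmetric group $(G,r_G)$ of $(X,r)$ is $G=G(X,r)$ with the unique such involutive braiding $r_G$ whose restriction to $X\times X$ is $r$. The associated left brace is $(G,+,\cdot)$ with $a+b:=a({}^{a^{-1}}b)$. *)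

From Stdlib Require Import List Relations.
Import ListNotations.
Set Implicit Arguments.

Definition bij (A B : Type) (f : A -> B) : Prop :=
  exists g : B -> A, (forall x, g (f x) = x) /\ (forall y, f (g y) = y).

(* sigma (a,b) = ( ^a b , a^b ) *)
Definition lact (A : Type) (s : A * A -> A * A) (a b : A) : A := fst (s (a, b)).
Definition ract (A : Type) (s : A * A -> A * A) (a b : A) : A := snd (s (a, b)).

Definition nondegenerate (A : Type) (s : A * A -> A * A) : Prop :=
  forall x : A, bij (fun y => lact s x y) /\ bij (fun y => ract s y x).

Definition involutive2 (A : Type) (s : A * A -> A * A) : Prop :=
  forall p, s (s p) = p.

Definition r12 (A : Type) (s : A * A -> A * A) (p : A * A * A) : A * A * A :=
  let '(a, b, c) := p in let '(a', b') := s (a, b) in (a', b', c).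
Definition r23 (A : Type) (s : A * A -> A * A) (p : A * A * A) : A * A * A :=
  let '(a, b, c) := p in let '(b', c') := s (b, c) in (a, b', c').

Definition braided (A : Type) (s : A * A -> A * A) : Prop :=
  forall p, r12 s (r23 s (r12 s p)) = r23 s (r12 s (r23 s p)).

Definition symmetric_set (A : Type) (s : A * A -> A * A) : Prop :=
  inhabited A /\ bij s /\ nondegenerate s /\ involutive2 s /\ braided s.

Definition is_group (G : Type) (mul : G -> G -> G) (one : G) (inv : G -> G) : Prop :=
  (forall a b c, mul a (mul b c) = mul (mul a b) c) /\
  (forall a, mul one a = a) /\ (forall a, mul a one = a) /\
  (forall a, mul (inv a) a = one) /\ (forall a, mul a (inv a) = one).

Definition symmetric_group (G : Type) (mul : G -> G -> G) (one : G) (inv : G -> G)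
    (s : G * G -> G * G) : Prop :=
  bij s /\ involutive2 s /\
  (forall a, lact s a one = one) /\
  (forall u, lact s one u = u) /\
  (forall u, ract s one u = one) /\
  (forall a, ract s a one = a) /\
  (forall a b u, lact s (mul a b) u = lact s a (lact s b u)) /\
  (forall a u v, ract s a (mul u v) = ract s (ract s a u) v) /\
  (forall a u v, lact s a (mul u v) = mul (lact s a u) (lact s (ract s a u) v)) /\
  (forall a b u, ract s (mul a b) u = mul (ract s a (lact s b u)) (ract s b u)) /\
  (forall u v, mul u v = mul (lact s u v) (ract s u v)).

(* signed words: (true,x) = x, (false,x) = x^-1 *)
Definition geval (X G : Type) (mul : G -> G -> G) (one : G) (inv : G -> G)
    (iota : X -> G) (w : list (bool * X)) : G :=
  fold_right (fun (p : bool * X) (acc : G) => mul (if fst p then iota (snd p) else inv (iota (snd p))) acc) one w.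

(* elementary moves of the monoid presentation of the group
   < X u X^-1 | x x^-1 = 1, x^-1 x = 1, x y = z t when r(x,y)=(z,t) > *)
Inductive gstep (X : Type) (r : X * X -> X * X) : list (bool * X) -> list (bool * X) -> Prop :=
  | gstep_inv1 (u v : list (bool * X)) (x : X) : gstep r (u ++ [(true, x); (false, x)] ++ v) (u ++ v)
  | gstep_inv2 (u v : list (bool * X)) (x : X) : gstep r (u ++ [(false, x); (true, x)] ++ v) (u ++ v)
  | gstep_rel (u v : list (bool * X)) (x y : X) : gstep r (u ++ [(true, x); (true, y)] ++ v)
                                 (u ++ [(true, fst (r (x, y))); (true, snd (r (x, y)))] ++ v).

(* (G, iota) is the YB group G(X,r): generated by iota(X), and two signed words have
   equal value iff they are equal in the presented group. *)
Definition is_YB_group (X G : Type) (r : X * X -> X * X)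
    (mul : G -> G -> G) (one : G) (inv : G -> G) (iota : X -> G) : Prop :=
  (forall g, exists w, geval mul one inv iota w = g) /\
  (forall w1 w2, geval mul one inv iota w1 = geval mul one inv iota w2 <->
                 clos_refl_sym_trans _ (gstep r) w1 w2).

Inductive mstep (X : Type) (r : X * X -> X * X) : list X -> list X -> Prop :=
  | mstep_rel (u v : list X) (x y : X) : mstep r (u ++ [x; y] ++ v) (u ++ [fst (r (x, y)); snd (r (x, y))] ++ v).

(* image in G of a positive word (the canonical map S(X,r) -> G(X,r)) *)
Definition meval (X G : Type) (mul : G -> G -> G) (one : G) (iota : X -> G) (w : list X) : G :=
  fold_right (fun (x : X) (acc : G) => mul (iota x) acc) one w.

(* injectivity of S(X,r) -> G(X,r), S(X,r) = (list X)/(congruence generated by mstep) *)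
Definition canonical_map_injective (X G : Type) (r : X * X -> X * X)
    (mul : G -> G -> G) (one : G) (iota : X -> G) : Prop :=
  forall w1 w2 : list X, meval mul one iota w1 = meval mul one iota w2 ->
                         clos_refl_sym_trans _ (mstep r) w1 w2.

Definition inS (X G : Type) (mul : G -> G -> G) (one : G) (iota : X -> G) (g : G) : Prop :=
  exists w : list X, meval mul one iota w = g.

Definition badd (G : Type) (mul : G -> G -> G) (inv : G -> G) (s : G * G -> G * G)
    (a b : G) : G := mul a (lact s (inv a) b).

(* finitely supported multiplicity functions: the free abelian monoid on X *)
Definition fin_supp (X : Type) (m : X -> nat) : Prop :=
  exists l : list X, forall x, m x <> 0 -> In x l.

From Stdlib Require Import List Relations Permutation ClassicalEpsilon ProofIrrelevance Lia.
Import ListNotations.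
Set Implicit Arguments.

(* Every element [^g] of the left action permutes the generators [iota X]: [^x]
   does so because [r_G] extends [r], and [^(x^-1)] because [r] is left
   non-degenerate.  With [^g (u v) = ^g u ^(g^u) v] this makes [S] stable under
   the left action, and [u^a = ^((^u a)^-1) u] gives the right action.  The
   axioms of a symmetric set are identities in [G], so they survive restriction.
   Since [x w = x + ^x w], the product of a word [x_1 ... x_n] is the brace sum of
   its "summands" [x_1, ^x_1 x_2, ...]; a defining relation of [S(X,r)] merely
   permutes them (by the braid relation), so as [S] embeds in [G] the multiset of
   summands is an invariant of the element, and it identifies [(S, +)] with the
   free abelian monoid on [X].  Finally [a (b + c) + a = a b + a c] is the brace
   identity [a (b + c) = a b - a + a c], valid in all of [G]. *)

Section Group.

Variables (G : Type) (mul : G -> G -> G) (one : G) (inv : G -> G).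
Hypothesis HG : is_group mul one inv.

Lemma mulA a b c : mul a (mul b c) = mul (mul a b) c.
Proof. now destruct HG as (H & _). Qed.

Lemma mul1l a : mul one a = a.
Proof. now destruct HG as (_ & H & _). Qed.

Lemma mul1r a : mul a one = a.
Proof. now destruct HG as (_ & _ & H & _). Qed.

Lemma mulVl a : mul (inv a) a = one.
Proof. now destruct HG as (_ & _ & _ & H & _). Qed.

Lemma mulVr a : mul a (inv a) = one.
Proof. now destruct HG as (_ & _ & _ & _ & H). Qed.

Lemma mul_cancel_l a b c : mul a b = mul a c -> b = c.
Proof.
  intros E. rewrite <- (mul1l b), <- (mul1l c), <- (mulVl a), <- !mulA, E.
  reflexivity.
Qed.

Lemma inv_one : inv one = one.
Proof. rewrite <- (mul1l (inv one)). apply mulVr. Qed.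

Lemma inv_mul a b : inv (mul a b) = mul (inv b) (inv a).
Proof.
  apply (mul_cancel_l (a := mul a b)).
  rewrite mulVr, <- mulA, (mulA b), mulVr, mul1l, mulVr. reflexivity.
Qed.

End Group.

Section SymmetricGroup.

Variables (G : Type) (mul : G -> G -> G) (one : G) (inv : G -> G).
Variable s : G * G -> G * G.
Hypothesis HG : is_group mul one inv.
Hypothesis HS : symmetric_group mul one inv s.

Lemma lact_one a : lact s a one = one.
Proof. now destruct HS as (_ & _ & H & _). Qed.

Lemma lact1 u : lact s one u = u.
Proof. now destruct HS as (_ & _ & _ & H & _). Qed.

Lemma ract_one a : ract s a one = a.
Proof. now destruct HS as (_ & _ & _ & _ & _ & H & _). Qed.

Lemma lactM a b u : lact s (mul a b) u = lact s a (lact s b u).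
Proof. now destruct HS as (_ & _ & _ & _ & _ & _ & H & _). Qed.

Lemma ractM a u v : ract s a (mul u v) = ract s (ract s a u) v.
Proof. now destruct HS as (_ & _ & _ & _ & _ & _ & _ & H & _). Qed.

Lemma lact_mul a u v :
  lact s a (mul u v) = mul (lact s a u) (lact s (ract s a u) v).
Proof. now destruct HS as (_ & _ & _ & _ & _ & _ & _ & _ & H & _). Qed.

Lemma mul_lact_ract u v : mul u v = mul (lact s u v) (ract s u v).
Proof. now destruct HS as (_ & _ & _ & _ & _ & _ & _ & _ & _ & _ & H). Qed.

Lemma lact_lact_ract u v : lact s (lact s u v) (ract s u v) = u.
Proof.
  destruct HS as (_ & Hinv & _). unfold lact, ract.
  now rewrite <- surjective_pairing, Hinv.
Qed.

Lemma ract_lact_ract u v : ract s (lact s u v) (ract s u v) = v.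
Proof.
  destruct HS as (_ & Hinv & _). unfold lact, ract.
  now rewrite <- surjective_pairing, Hinv.
Qed.

Lemma lactVK a u : lact s (inv a) (lact s a u) = u.
Proof. now rewrite <- lactM, (mulVl HG), lact1. Qed.

Lemma lactKV a u : lact s a (lact s (inv a) u) = u.
Proof. now rewrite <- lactM, (mulVr HG), lact1. Qed.

Lemma ract_as_lact u a : ract s u a = lact s (inv (lact s u a)) u.
Proof. now rewrite <- (lactVK (lact s u a) (ract s u a)), lact_lact_ract. Qed.

Lemma braid_lact_lact a b c :
  lact s (lact s a b) (lact s (ract s a b) c) = lact s a (lact s b c).
Proof. now rewrite <- lactM, <- mul_lact_ract, lactM. Qed.

Lemma braid_ract_ract a b c :
  ract s (ract s a b) c = ract s (ract s a (lact s b c)) (ract s b c).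
Proof. now rewrite <- !ractM, <- mul_lact_ract. Qed.

(* Left-multiplied by the common value of [braid_lact_lact], both sides become
   [lact s a (mul b c)]. *)
Lemma braid_ract_lact a b c :
  ract s (lact s a b) (lact s (ract s a b) c) =
  lact s (ract s a (lact s b c)) (ract s b c).
Proof.
  apply (mul_cancel_l HG (lact s a (lact s b c))).
  rewrite <- braid_lact_lact at 1.
  now rewrite <- mul_lact_ract, <- lact_mul, <- lact_mul, <- mul_lact_ract.
Qed.

Local Notation add := (badd mul inv s).

Lemma badd_lact a b : add a (lact s a b) = mul a b.
Proof. unfold badd. now rewrite lactVK. Qed.

Lemma baddC a b : add a b = add b a.
Proof.
  unfold badd. set (c := lact s (inv a) b).
  assert (Hc : lact s a c = b) by apply lactKV.
  rewrite (mul_lact_ract a c), Hc. f_equal.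
  rewrite <- (lactVK b (ract s a c)). f_equal.
  now rewrite <- Hc, lact_lact_ract.
Qed.

Lemma lact_badd a b c : lact s a (add b c) = add (lact s a b) (lact s a c).
Proof.
  unfold badd. rewrite lact_mul. f_equal.
  rewrite <- (lactKV b c) at 2.
  now rewrite <- (lactM a b), (mul_lact_ract a b), lactM, lactVK.
Qed.

Lemma baddA a b c : add a (add b c) = add (add a b) c.
Proof.
  unfold badd at 1. rewrite lact_badd.
  set (b' := lact s (inv a) b).
  change (add a b) with (mul a b'). unfold badd.
  now rewrite (inv_mul HG), lactM, (mulA HG).
Qed.

Lemma badd1l a : add one a = a.
Proof. unfold badd. now rewrite (inv_one HG), (mul1l HG), lact1. Qed.

Lemma badd1r a : add a one = a.
Proof. unfold badd. now rewrite lact_one, (mul1r HG). Qed.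

Lemma badd_mul_distr a b c : add (mul a (add b c)) a = add (mul a b) (mul a c).
Proof.
  rewrite <- (badd_lact a (add b c)), <- (badd_lact a b), <- (badd_lact a c), lact_badd.
  set (p := lact s a b). set (q := lact s a c).
  rewrite !baddA, <- (baddA (add a p) q a), (baddC q a), baddA.
  reflexivity.
Qed.

End SymmetricGroup.

Section Restriction.

Variables (G : Type) (mul : G -> G -> G) (one : G) (inv : G -> G).
Variable s : G * G -> G * G.
Hypothesis HG : is_group mul one inv.
Hypothesis HS : symmetric_group mul one inv s.

Variable P : G -> Prop.
Hypothesis P_one : P one.
Hypothesis P_lact : forall a u, P u -> P (lact s a u).
Hypothesis P_ract : forall u a, P u -> P (ract s u a).

Definition restrict_sigma (pq : {g | P g} * {g | P g}) : {g | P g} * {g | P g} :=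
  let (p, q) := pq in
  (exist P (lact s (proj1_sig p) (proj1_sig q)) (P_lact _ (proj2_sig q)),
   exist P (ract s (proj1_sig p) (proj1_sig q)) (P_ract _ (proj2_sig p))).

Lemma sig_eq (p q : {g | P g}) : proj1_sig p = proj1_sig q -> p = q.
Proof. apply eq_sig_hprop. intros; apply proof_irrelevance. Qed.

Lemma restrict_sigma_involutive : involutive2 restrict_sigma.
Proof.
  intros [p q]. cbn.
  f_equal; apply sig_eq; cbn; [apply (lact_lact_ract HS) | apply (ract_lact_ract HS)].
Qed.

Lemma restrict_sigma_nondegenerate : nondegenerate restrict_sigma.
Proof.
  intros [a Ha]. split.
  - exists (fun v => exist P (lact s (inv a) (proj1_sig v)) (P_lact _ (proj2_sig v))).
    split; intros v; apply sig_eq; cbn; [apply (lactVK HG HS) | apply (lactKV HG HS)].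
  - exists (fun v => exist P (ract s (proj1_sig v) (inv a)) (P_ract _ (proj2_sig v))).
    split; intros v; apply sig_eq; cbn;
      rewrite <- (ractM HS), ?(mulVl HG), ?(mulVr HG); apply (ract_one HS).
Qed.

Lemma restrict_sigma_braided : braided restrict_sigma.
Proof.
  intros [[a b] c]. cbn.
  f_equal; [f_equal|]; apply sig_eq; cbn;
    [apply (braid_lact_lact HS) | apply (braid_ract_lact HG HS) | apply (braid_ract_ract HS)].
Qed.

Lemma symmetric_set_restrict_sigma : symmetric_set restrict_sigma.
Proof.
  repeat split.
  - exact (exist P one P_one).
  - exists restrict_sigma. split; apply restrict_sigma_involutive.
  - apply restrict_sigma_nondegenerate.
  - apply restrict_sigma_nondegenerate.
  - apply restrict_sigma_involutive.
  - apply restrict_sigma_braided.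
Qed.

End Restriction.

Section Words.

Variables (X : Type) (r : X * X -> X * X).

Fixpoint summands (w : list X) : list X :=
  match w with
  | [] => []
  | x :: w' => x :: map (lact r x) (summands w')
  end.

Lemma lact_braid :
  braided r -> forall x y c,
  lact r (lact r x y) (lact r (ract r x y) c) = lact r x (lact r y c).
Proof.
  intros Hbr x y c. specialize (Hbr (x, y, c)). unfold r12, r23, lact, ract in *.
  destruct (r (x, y)) as [z t]. cbn in *.
  destruct (r (t, c)) as [t1 c1]. cbn in *.
  destruct (r (z, t1)) as [z2 t2]. cbn in *.
  destruct (r (y, c)) as [y3 c3]. cbn in *.
  destruct (r (x, y3)) as [x4 y4]. cbn in *.
  destruct (r (y4, c3)) as [y5 c5]. cbn in *. congruence.
Qed.

Lemma summands_mstep :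
  involutive2 r -> braided r -> forall w1 w2,
  mstep r w1 w2 -> Permutation (summands w1) (summands w2).
Proof.
  intros Hinv Hbr w1 w2 [u v x y].
  induction u as [|a u IH]; cbn.
  - assert (Hx : lact r (lact r x y) (ract r x y) = x).
    { unfold lact, ract. now rewrite <- surjective_pairing, Hinv. }
    fold (lact r x y) (ract r x y). rewrite Hx, !map_map.
    rewrite (map_ext _ _ (lact_braid Hbr x y)).
    apply perm_swap.
  - now apply perm_skip, Permutation_map.
Qed.

Lemma summands_congr :
  involutive2 r -> braided r -> forall w1 w2,
  clos_refl_sym_trans _ (mstep r) w1 w2 -> Permutation (summands w1) (summands w2).
Proof.
  intros Hinv Hbr w1 w2 H. induction H.
  - now apply summands_mstep.
  - reflexivity.
  - now symmetry.
  - now transitivity (summands y).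
Qed.

Lemma summands_surjective :
  nondegenerate r -> forall l, exists w, summands w = l.
Proof.
  intros Hnd l. remember (length l) as n eqn:Hn. revert l Hn.
  induction n as [|n IH]; intros [|x l] Hn; try discriminate.
  - now exists [].
  - destruct (proj1 (Hnd x)) as [g [_ Hg]].
    destruct (IH (map g l)) as [w Hw].
    { rewrite length_map. cbn in Hn. congruence. }
    exists (x :: w). cbn. rewrite Hw, map_map.
    f_equal. rewrite (map_ext _ (fun z => z)); [apply map_id | apply Hg].
Qed.

Lemma count_occ_fin_supp (eq_dec : forall x y : X, {x = y} + {x <> y}) (m : X -> nat) :
  fin_supp m -> exists l, forall x, count_occ eq_dec l x = m x.
Proof.
  intros [l0 Hl0]. revert m Hl0.
  induction l0 as [|y l0 IH]; intros m Hm.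
  - exists []. intros x. cbn. destruct (m x) eqn:E; [easy|].
    exfalso. apply (Hm x). congruence.
  - destruct (IH (fun x => if eq_dec x y then 0 else m x)) as [l Hl].
    { intros x Hx. destruct (eq_dec x y); [congruence|].
      destruct (Hm x Hx); [congruence | assumption]. }
    exists (repeat y (m y) ++ l). intros x. rewrite count_occ_app, Hl.
    destruct (eq_dec x y) as [->|ne].
    + now rewrite count_occ_repeat_eq.
    + now rewrite count_occ_repeat_neq.
Qed.

End Words.

Section YBGroup.

Variables (X : Type) (r : X * X -> X * X).
Variables (G : Type) (mul : G -> G -> G) (one : G) (inv : G -> G) (iota : X -> G).
Variable rG : G * G -> G * G.
Hypothesis HG : is_group mul one inv.
Hypothesis HS : symmetric_group mul one inv rG.
Hypothesis rG_iota :
  forall x y, rG (iota x, iota y) = (iota (fst (r (x, y))), iota (snd (r (x, y)))).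
Hypothesis Hnd : nondegenerate r.

Local Notation S := (inS mul one iota).
Local Notation add := (badd mul inv rG).

Lemma lact_iota x y : lact rG (iota x) (iota y) = iota (lact r x y).
Proof. unfold lact at 1. now rewrite rG_iota. Qed.

Lemma meval_cons x w : meval mul one iota (x :: w) = mul (iota x) (meval mul one iota w).
Proof. reflexivity. Qed.

Lemma meval_app w1 w2 :
  meval mul one iota (w1 ++ w2) = mul (meval mul one iota w1) (meval mul one iota w2).
Proof.
  induction w1 as [|x w1 IH]; cbn [app].
  - now rewrite (mul1l HG).
  - now rewrite !meval_cons, IH, (mulA HG).
Qed.

Lemma inS_one : S one.
Proof. now exists []. Qed.

Lemma inS_mul a b : S a -> S b -> S (mul a b).
Proof. intros [wa <-] [wb <-]. exists (wa ++ wb). apply meval_app. Qed.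

Lemma lact_geval_iota w x : exists y, lact rG (geval mul one inv iota w) (iota x) = iota y.
Proof.
  revert x. unfold geval. induction w as [|[[] z] w IH]; intros x; cbn.
  - exists x. apply (lact1 HS).
  - rewrite (lactM HS). destruct (IH x) as [y ->]. rewrite lact_iota. now eexists.
  - rewrite (lactM HS). destruct (IH x) as [y ->].
    destruct (proj1 (Hnd z)) as [g [_ Hg]].
    exists (g y). rewrite <- (Hg y) at 1. now rewrite <- lact_iota, (lactVK HG HS).
Qed.

Lemma inS_lact :
  is_YB_group r mul one inv iota -> forall a u, S u -> S (lact rG a u).
Proof.
  intros [Hgen _] a u [w <-]. revert a.
  induction w as [|x w IH]; intros a.
  - rewrite (lact_one HS). apply inS_one.
  - rewrite meval_cons, (lact_mul HS).
    destruct (Hgen a) as [v <-]. destruct (lact_geval_iota v x) as [y ->].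
    destruct (IH (ract rG (geval mul one inv iota v) (iota x))) as [w' Hw'].
    exists (y :: w'). now rewrite meval_cons, Hw'.
Qed.

Lemma inS_ract :
  is_YB_group r mul one inv iota -> forall u a, S u -> S (ract rG u a).
Proof.
  intros HYB u a Hu. rewrite (ract_as_lact HG HS). now apply inS_lact.
Qed.

Definition bsum (l : list G) : G := fold_right add one l.

Lemma bsum_cons a l : bsum (a :: l) = add a (bsum l).
Proof. reflexivity. Qed.

Lemma bsum_lact a l : lact rG a (bsum l) = bsum (map (lact rG a) l).
Proof.
  induction l as [|b l IH]; cbn [map].
  - apply (lact_one HS).
  - now rewrite !bsum_cons, (lact_badd HG HS), IH.
Qed.

Lemma bsum_app l1 l2 : bsum (l1 ++ l2) = add (bsum l1) (bsum l2).
Proof.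
  induction l1 as [|a l1 IH]; cbn [app].
  - now rewrite (badd1l HG HS).
  - now rewrite !bsum_cons, IH, (baddA HG HS).
Qed.

Lemma bsum_perm l1 l2 : Permutation l1 l2 -> bsum l1 = bsum l2.
Proof.
  induction 1; rewrite ?bsum_cons; try congruence.
  now rewrite !(baddA HG HS), (baddC HG HS y x).
Qed.

Lemma meval_summands w : meval mul one iota w = bsum (map iota (summands r w)).
Proof.
  induction w as [|x w IH]; [reflexivity|].
  cbn [summands map]. rewrite meval_cons, bsum_cons.
  rewrite <- (badd_lact HG HS), IH, bsum_lact, !map_map.
  do 2 f_equal. apply map_ext. intros y. apply lact_iota.
Qed.

Lemma bsum_iota_meval l :
  exists w, meval mul one iota w = bsum (map iota l) /\ summands r w = l.
Proof.
  destruct (summands_surjective Hnd l) as [w <-].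
  exists w. split; [apply meval_summands | reflexivity].
Qed.

Lemma inS_bsum_iota l : S (bsum (map iota l)).
Proof. destruct (bsum_iota_meval l) as [w [Hw _]]. now exists w. Qed.

Lemma inS_badd :
  is_YB_group r mul one inv iota -> forall a b, S a -> S b -> S (add a b).
Proof. intros HYB a b Ha Hb. apply inS_mul; [|apply inS_lact]; assumption. Qed.

Lemma inS_eq_bsum_iota a : S a -> exists l, a = bsum (map iota l).
Proof. intros [w <-]. exists (summands r w). apply meval_summands. Qed.

Hypothesis Hinv : involutive2 r.
Hypothesis Hbr : braided r.
Hypothesis Hinj : canonical_map_injective r mul one iota.

Definition dec_eq (x y : X) : {x = y} + {x <> y} := excluded_middle_informative (x = y).

(* An arbitrary word when [a] is not in [S]; for [a] in [S] the choice of word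
   does not matter by [multiplicity_meval]. *)
Definition word_of (a : G) : list X :=
  epsilon (inhabits []) (fun w => meval mul one iota w = a).

Definition multiplicity (a : G) (x : X) : nat := count_occ dec_eq (summands r (word_of a)) x.

Lemma multiplicity_meval w x :
  multiplicity (meval mul one iota w) x = count_occ dec_eq (summands r w) x.
Proof.
  unfold multiplicity.
  apply Permutation_count_occ, (summands_congr Hinv Hbr), Hinj.
  apply (epsilon_spec (inhabits []) (fun v => meval mul one iota v = meval mul one iota w)).
  now exists w.
Qed.

Lemma multiplicity_bsum_iota l x : multiplicity (bsum (map iota l)) x = count_occ dec_eq l x.
Proof.
  destruct (bsum_iota_meval l) as [w [<- <-]].
  apply multiplicity_meval.
Qed.

Lemma fin_supp_multiplicity a : S a -> fin_supp (multiplicity a).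
Proof.
  intros [l ->]%inS_eq_bsum_iota. exists l. intros x.
  rewrite multiplicity_bsum_iota, (count_occ_In dec_eq). lia.
Qed.

Lemma multiplicity_inj a b :
  S a -> S b -> (forall x, multiplicity a x = multiplicity b x) -> a = b.
Proof.
  intros [la ->]%inS_eq_bsum_iota [lb ->]%inS_eq_bsum_iota Hab.
  apply bsum_perm, Permutation_map, (Permutation_count_occ dec_eq).
  intros x. now rewrite <- !multiplicity_bsum_iota.
Qed.

Lemma multiplicity_surj m :
  fin_supp m -> exists a, S a /\ forall x, multiplicity a x = m x.
Proof.
  intros Hm. destruct (count_occ_fin_supp dec_eq Hm) as [l Hl].
  exists (bsum (map iota l)). split; [apply inS_bsum_iota|].
  intros x. now rewrite multiplicity_bsum_iota.
Qed.

Lemma multiplicity_one x : multiplicity one x = 0.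
Proof. exact (multiplicity_bsum_iota [] x). Qed.

Lemma multiplicity_badd a b x :
  S a -> S b -> multiplicity (add a b) x = multiplicity a x + multiplicity b x.
Proof.
  intros [la ->]%inS_eq_bsum_iota [lb ->]%inS_eq_bsum_iota.
  now rewrite <- bsum_app, <- map_app, !multiplicity_bsum_iota, count_occ_app.
Qed.

End YBGroup.

Theorem mainTheorem3 (X : Type) (r : X * X -> X * X)
    (G : Type) (mul : G -> G -> G) (one : G) (inv : G -> G) (iota : X -> G)
    (rG : G * G -> G * G) :
  symmetric_set r ->
  is_group mul one inv ->
  is_YB_group r mul one inv iota ->
  symmetric_group mul one inv rG ->
  (forall x y, rG (iota x, iota y) = (iota (fst (r (x, y))), iota (snd (r (x, y))))) ->
  canonical_map_injective r mul one iota ->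
  let S := inS mul one iota in
  let add := badd mul inv rG in
  ((forall a u, S u -> S (lact rG a u) /\ S (ract rG u a)) /\
   (forall u v, S u -> S v -> S (fst (rG (u, v))) /\ S (snd (rG (u, v))))) /\
  (exists rS : {g : G | S g} * {g : G | S g} -> {g : G | S g} * {g : G | S g},
     (forall p q, proj1_sig (fst (rS (p, q))) = fst (rG (proj1_sig p, proj1_sig q)) /\
                  proj1_sig (snd (rS (p, q))) = snd (rG (proj1_sig p, proj1_sig q))) /\
     symmetric_set rS) /\
  ((forall a b, S a -> S b -> S (add a b)) /\
   (S one /\ forall a b, S a -> S b -> S (mul a b)) /\
   (forall a b c, S a -> S b -> S c -> add a (add b c) = add (add a b) c) /\
   (forall a b, S a -> S b -> add a b = add b a) /\
   (forall a, S a -> add one a = a /\ add a one = a) /\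
   (exists f : G -> (X -> nat),
      (forall a, S a -> fin_supp (f a)) /\
      (forall a b, S a -> S b -> (forall x, f a x = f b x) -> a = b) /\
      (forall m, fin_supp m -> exists a, S a /\ forall x, f a x = m x) /\
      (forall x, f one x = 0) /\
      (forall a b x, S a -> S b -> f (add a b) x = f a x + f b x)) /\
   (forall a b c, S a -> S b -> S c ->
      add (mul a (add b c)) a = add (mul a b) (mul a c))).
Proof.
  intros Hr HG HYB HS HrG Hinj S add. subst S add.
  pose proof Hr as (_ & _ & Hnd & Hinv & Hbr).
  pose proof (inS_lact HG HS HrG Hnd HYB) as S_lact.
  pose proof (inS_ract HG HS HrG Hnd HYB) as S_ract.
  split; [|split].
  - split; intros; split; [apply S_lact | apply S_ract | apply S_lact | apply S_ract]; assumption.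
  - exists (restrict_sigma rG (inS mul one iota) S_lact S_ract). split; [easy|].
    apply (symmetric_set_restrict_sigma HG HS), inS_one.
  - split; [|split; [|split; [|split; [|split; [|split]]]]].
    + exact (inS_badd HG HS HrG Hnd HYB).
    + split; [apply inS_one | exact (inS_mul HG)].
    + intros; apply (baddA HG HS).
    + intros; apply (baddC HG HS).
    + intros; split; [apply (badd1l HG HS) | apply (badd1r HG HS)].
    + exists (multiplicity r mul one iota). repeat split.
      * exact (fin_supp_multiplicity HG HS HrG Hnd Hinv Hbr Hinj).
      * exact (multiplicity_inj HG HS HrG Hnd Hinv Hbr Hinj).
      * exact (multiplicity_surj HG HS HrG Hnd Hinv Hbr Hinj).
      * exact (multiplicity_one HG HS HrG Hnd Hinv Hbr Hinj).
      * intros a b x; exact (multiplicity_badd HG HS HrG Hnd Hinv Hbr Hinj x).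
    + intros; apply (badd_mul_distr HG HS).
Qed.
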